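(* There is an absolute constant $c>0$ such that for every $\delta'\in(0,1)$, with probability at least $1-2\delta'$ over the draw of $\mathcal D$, simultaneously for all $V\in\mathcal V$ and $\pi\in\mathcal P$, $$\Big|\mathscr R_{\mathcal D}(\hat g_{V,\pi};V,\pi)-\mathscr R_{\mathcal D}(\mathcal C^\pi_\lambda V;V,\pi)\Big|\le c\left(\epsilon_{\mathcal G,\mathcal V,\mathcal P}+\sqrt{\frac{\iota}{n}\epsilon_{\mathcal G,\mathcal V,\mathcal P}}+\frac{\iota}{n}\right),$$ where $\iota=V_{\lambda,\max}^2\ln\frac{|\mathcal V||\mathcal P||\mathcal G|}{\delta'}$ and $\hat g_{V,\pi}\in\arg\min_{g\in\mathcal G}\mathscr R_{\mathcal D}(g;V,\pi)$.
   Context: Finite MDP with state space $\mathcal S$, action space $\mathcal A$, discount $\gamma\in[0,1)$, kernel $P$, reward $R:\mathcal S\times\mathcal A\to[0,R_{\max}]$; $\lambda>0$. $(\mathbb PV)(s,a)=\sum_{s'}P(s'\mid s,a)V(s')$; $(\mathcal C^\pi_\lambda V)(s,a)=R(s,a)+\gamma(\mathbb PV)(s,a)-\lambda\ln\pi(a\mid s)$. $\mu\in\Delta(\mathcal S\times\mathcal A)$, $\|f\|^2_{2,\mu}=\mathbb E_{\mu}[f(s,a)^2]$. $V_{\lambda,\max}=(R_{\max}+\lambda\ln|\mathcal A|)/(1-\gamma)$. Finite classes $\mathcal V\subset[0,V_{\lambda,\max}]^{\mathcal S}$, $\mathcal P\subset\{\pi:\|\ln\pi\|_\infty\le V_{\lambda,\max}/\lambda\}$,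 $\mathcal G\subset[0,2V_{\lambda,\max}]^{\mathcal S\times\mathcal A}$. Dataset $\mathcal D=\{(s_i,a_i,r_i,s_i')\}_{i=1}^n$ with $(s_i,a_i)$ i.i.d. from $\mu$, $r_i=R(s_i,a_i)$, $s_i'\sim P(\cdot\mid s_i,a_i)$ independently. For a function $g:\mathcal S\times\mathcal A\to\mathbb R$, $\mathscr R_{\mathcal D}(g;V,\pi)=\frac1n\sum_i\big(g(s_i,a_i)-r_i-\gamma V(s_i')+\lambda\ln\pi(a_i\mid s_i)\big)^2$. $\epsilon_{\mathcal G,\mathcal V,\mathcal P}=\max_{V\in\mathcal V,\pi\in\mathcal P}\min_{g\in\mathcal G}\|g-\mathcal C^\pi_\lambda V\|^2_{2,\mu}$. *)

From HB Require Import structures.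
From mathcomp Require Import all_boot all_order all_algebra.
From mathcomp Require Import all_classical all_reals all_analysis.
Set Implicit Arguments. Unset Strict Implicit. Unset Printing Implicit Defensive.
Import Order.TTheory GRing.Theory Num.Theory.
Local Open Scope ring_scope.

Section Defs.
Variables (R : realType) (S A : finType).

Definition Vlmax (gamma Rmax lam : R) : R :=
  (Rmax + lam * ln (#|A|%:R)) / (1 - gamma).

Definition bellC (P : S -> A -> {ffun S -> R}) (Rw : S -> A -> R) (gamma lam : R)
  (pi : {ffun S * A -> R}) (V : {ffun S -> R}) : {ffun S * A -> R} :=
  [ffun sa => Rw sa.1 sa.2 + gamma * (\sum_(s' : S) P sa.1 sa.2 s' * V s')
              - lam * ln (pi sa)].

Definition sqnorm_mu (mu : {ffun S * A -> R}) (f : S * A -> R) : R :=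
  \sum_(sa : S * A) mu sa * f sa ^+ 2.

(* empirical risk R_D(g; V, pi); a data point is ((s_i, a_i), s'_i), r_i = R(s_i,a_i) *)
Definition emp_risk (n : nat) (Rw : S -> A -> R) (gamma lam : R)
  (D : {ffun 'I_n -> (S * A) * S}) (g : S * A -> R)
  (V : {ffun S -> R}) (pi : {ffun S * A -> R}) : R :=
  n%:R^-1 * \sum_(i < n)
     (g (D i).1 - Rw (D i).1.1 (D i).1.2 - gamma * V (D i).2 + lam * ln (pi (D i).1)) ^+ 2.

Definition seqmin (T : Type) (x0 : T) (f : T -> R) (s : seq T) : R :=
  \big[Num.min/f (head x0 s)]_(x <- s) f x.

(* maximum of a nonnegative f over a (nonempty) sequence *)
Definition seqmax0 (T : Type) (f : T -> R) (s : seq T) : R :=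
  \big[Num.max/0]_(x <- s) f x.

Definition eps_approx (P : S -> A -> {ffun S -> R}) (Rw : S -> A -> R) (gamma lam : R)
  (mu : {ffun S * A -> R}) (Vs : seq {ffun S -> R}) (Ps : seq {ffun S * A -> R})
  (Gs : seq {ffun S * A -> R}) : R :=
  seqmax0 (fun V => seqmax0 (fun pi =>
     seqmin [ffun=> 0] (fun g => sqnorm_mu mu (fun sa => g sa - bellC P Rw gamma lam pi V sa)) Gs)
   Ps) Vs.

(* probability of a sample D of n i.i.d. transitions: (s_i,a_i) ~ mu, s'_i ~ P(.|s_i,a_i) *)
Definition data_weight (n : nat) (mu : {ffun S * A -> R}) (P : S -> A -> {ffun S -> R})
  (D : {ffun 'I_n -> (S * A) * S}) : R :=
  \prod_(i < n) (mu (D i).1 * P (D i).1.1 (D i).1.2 (D i).2).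

Definition data_prob (n : nat) (mu : {ffun S * A -> R}) (P : S -> A -> {ffun S -> R})
  (E : pred {ffun 'I_n -> (S * A) * S}) : R :=
  \sum_(D : {ffun 'I_n -> (S * A) * S} | E D) data_weight mu P D.

End Defs.

From HB Require Import structures.
From mathcomp Require Import all_boot all_order all_algebra.
From mathcomp Require Import all_classical all_reals all_analysis.
From mathcomp Require Import ring lra.
Set Implicit Arguments. Unset Strict Implicit. Unset Printing Implicit Defensive.
Import Order.TTheory GRing.Theory Num.Theory.
Local Open Scope ring_scope.

(* Write K = V_{lambda,max}.  Every regression target y = r + gamma V(s')
   - lambda ln pi(a|s), every Bellman value C^pi_lambda V and every g in G lies
   in [0, 2K].  The excess loss Z_g = (g - y)^2 - (C V - y)^2 splits as
   (g - CV)^2 + 2 (g - CV)(CV - y), where CV - y has conditional mean zero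
   given (s,a).  A second-order bound on the exponential then gives, for
   t = 1/(64 K^2), the moment bounds E exp(-t Z_g) <= 1 and
   E exp(t Z_g) <= exp(4 t ||g - CV||^2_mu).  Chernoff's bound on the product
   measure of the data, a union bound over V x P x G (lower tails) and over
   V x P for a mu-approximate minimiser g* (upper tails) show that with
   probability >= 1 - 2 delta all these sums deviate by at most 64 iota.  On
   that event the empirical minimality of g_hat sandwiches its excess risk
   between -64 iota/n and 4 eps + 64 iota/n, which yields the theorem with
   c = 64.  The degenerate case K <= 0 forces G to consist of CV alone. *)

Section ExponentialBounds.
Variable R : realType.

(* exp u <= 1/(1-u), from 1 - u <= exp(-u). *)
Lemma expR_le_inv (u : R) : u < 1 -> expR u <= (1 - u)^-1.
Proof.
move=> hu; have h := expR_ge1Dx (- u); rewrite expRN in h.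
have h0 : 0 < 1 - u by lra.
by rewrite -(invrK (expR u)) lef_pV2 ?posrE ?invr_gt0 ?expR_gt0.
Qed.

Lemma expR_le_quad (u : R) : -(1/2) <= u -> u <= 1/2 -> expR u <= 1 + u + 2 * u ^+ 2.
Proof.
move=> h1 h2; have hi : u < 1 by lra.
apply: (le_trans (expR_le_inv hi)).
have h0 : 0 < 1 - u by lra.
rewrite -div1r ler_pdivrMr //.
have : 0 <= u ^+ 2 * (1 - 2 * u) by apply: mulr_ge0; [exact: sqr_ge0 | lra].
rewrite expr2; nra.
Qed.

Lemma expR_le_lin (v : R) : 0 <= v -> v <= 1/2 -> expR v <= 1 + 2 * v.
Proof.
move=> h1 h2; have hi : v < 1 by lra.
apply: (le_trans (expR_le_inv hi)).
have h0 : 0 < 1 - v by lra.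
rewrite -div1r ler_pdivrMr //; nra.
Qed.

Lemma centred_mgf (T : finType) (p e : T -> R) (d K t sg : R) :
  (forall x, 0 <= p x) -> \sum_x p x = 1 -> \sum_x p x * e x = 0 ->
  (forall x, e x ^+ 2 <= 4 * K ^+ 2) -> d ^+ 2 <= 4 * K ^+ 2 ->
  0 < t -> 64 * t * K ^+ 2 <= 1 -> sg ^+ 2 = 1 ->
  \sum_x p x * expR (t * (sg * (d ^+ 2 + 2 * d * e x)))
    <= expR (t * (sg * d ^+ 2)) * (1 + t * d ^+ 2).
Proof.
move=> p0 p1 pe0 he hd t0 htK hsg.
have hK : 0 <= K ^+ 2 by exact: sqr_ge0.
have htd : t * d ^+ 2 <= 1/16 by have := ler_wpM2l (ltW t0) hd; nra.
have htd0 : 0 <= t * d ^+ 2 by apply: mulr_ge0; [exact: ltW | exact: sqr_ge0].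
have pointwise x : p x * expR (t * (sg * (d ^+ 2 + 2 * d * e x))) <=
    expR (t * (sg * d ^+ 2)) * (p x + (2 * sg * t * d) * (p x * e x) + t * d ^+ 2 * p x).
  have hte : t * e x ^+ 2 <= 1/16 by have := ler_wpM2l (ltW t0) (he x); nra.
  have hte0 : 0 <= t * e x ^+ 2 by apply: mulr_ge0; [exact: ltW | exact: sqr_ge0].
  set u := sg * (2 * t * d * e x).
  have hu2 : u ^+ 2 = 4 * (t * d ^+ 2) * (t * e x ^+ 2) by rewrite /u exprMn hsg; ring.
  have hu2_le : 2 * u ^+ 2 <= t * d ^+ 2 by rewrite hu2; have := ler_wpM2l htd0 hte; nra.
  have hu_small : u ^+ 2 <= 1/64 by rewrite hu2; have := ler_wpM2l htd0 hte; nra.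
  have hexp_u : expR u <= 1 + u + t * d ^+ 2.
    by have := @expR_le_quad u ltac:(nra) ltac:(nra); lra.
  have -> : t * (sg * (d ^+ 2 + 2 * d * e x)) = t * (sg * d ^+ 2) + u by rewrite /u; ring.
  rewrite expRD mulrCA ler_pM2l ?expR_gt0 //.
  have -> : p x + 2 * sg * t * d * (p x * e x) + t * d ^+ 2 * p x
          = p x * (1 + u + t * d ^+ 2) by rewrite /u; ring.
  by apply: ler_wpM2l.
apply: (le_trans (ler_sum _ (fun x _ => pointwise x))).
rewrite -mulr_sumr big_split /= big_split /= -mulr_sumr -mulr_sumr pe0 p1.
by rewrite mulr0 addr0 mulr1.
Qed.

End ExponentialBounds.

Section ProductMeasure.
(* The law of n i.i.d. draws from a weight w on a finite type X. *)
Variables (R : realType) (X : finType) (n : nat) (w : X -> R).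
Hypothesis w_ge0 : forall x, 0 <= w x.

Definition W (D : {ffun 'I_n -> X}) : R := \prod_(i < n) w (D i).
Definition Pr (E : pred {ffun 'I_n -> X}) : R := \sum_(D | E D) W D.

Lemma W_ge0 D : 0 <= W D.
Proof. by apply: prodr_ge0 => i _; apply: w_ge0. Qed.

Lemma expect_prod (h : X -> R) :
  \sum_D W D * \prod_(i < n) h (D i) = \prod_(i < n) \sum_x w x * h x.
Proof. by rewrite bigA_distr_bigA; apply: eq_bigr => D _; rewrite /W -big_split. Qed.

Lemma Pr_total : \sum_x w x = 1 -> Pr xpredT = 1.
Proof.
move=> w1; have := expect_prod (fun=> 1).
have -> : \prod_(i < n) \sum_x w x * 1 = 1.
  by apply: big1 => i _; under eq_bigr do rewrite mulr1.
by move <-; apply: eq_bigr => D _; rewrite big1_eq mulr1.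
Qed.

Lemma Pr_mono (E F : pred {ffun 'I_n -> X}) : (forall D, E D -> F D) -> Pr E <= Pr F.
Proof.
move=> hEF; rewrite /Pr [X in _ <= X](bigID E) /=.
have -> : \sum_(D | F D && E D) W D = \sum_(D | E D) W D.
  by apply: eq_bigl => D; case: (boolP (E D)) => hD; rewrite ?andbT ?andbF ?hEF.
by rewrite lerDl; apply: sumr_ge0 => D _; exact: W_ge0.
Qed.

Lemma Pr_compl (E : pred {ffun 'I_n -> X}) : \sum_x w x = 1 -> Pr E = 1 - Pr (predC E).
Proof.
by move=> w1; rewrite -(Pr_total w1) /Pr [X in _ = X - _](bigID E) /= addrK.
Qed.

Lemma Pr_markov (E : pred {ffun 'I_n -> X}) (h : X -> R) (a : R) :
  (forall x, 0 <= h x) -> 0 < a -> (forall D, E D -> a <= \prod_(i < n) h (D i)) ->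
  Pr E <= (\prod_(i < n) \sum_x w x * h x) / a.
Proof.
move=> h0 a0 hE; rewrite -expect_prod ler_pdivlMr // /Pr big_distrl /=.
apply: (le_trans (y := \sum_(D | E D) W D * \prod_(i < n) h (D i))).
  by apply: ler_sum => D /hE hD; apply: ler_wpM2l => //; exact: W_ge0.
rewrite [X in _ <= X](bigID E) /= lerDl; apply: sumr_ge0 => D _.
by apply: mulr_ge0; [exact: W_ge0 | apply: prodr_ge0].
Qed.

Lemma Pr_chernoff (Z : X -> R) (t b c : R) :
  0 < t -> \sum_x w x * expR (t * Z x) <= expR c ->
  Pr (fun D => b <= \sum_(i < n) Z (D i)) <= expR (n%:R * c - t * b).
Proof.
move=> t0 hZ.
apply: (le_trans (@Pr_markov _ (fun x => expR (t * Z x)) (expR (t * b)) _ _ _)).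
- by move=> x; exact: expR_ge0.
- exact: expR_gt0.
- by move=> D hD; rewrite -expR_sum -mulr_sumr ler_expR ler_wpM2l // ltW.
rewrite ler_pdivrMr ?expR_gt0 // -expRD subrK.
apply: (le_trans (y := \prod_(i < n) expR c)).
  apply: ler_prod => i _; apply/andP; split=> //.
  by apply: sumr_ge0 => x _; apply: mulr_ge0 => //; exact: expR_ge0.
by rewrite -expR_sum sumr_const card_ord mulr_natl.
Qed.

Lemma Pr_exists (J : finType) (B : J -> pred {ffun 'I_n -> X}) :
  Pr (fun D => [exists j, B j D]) <= \sum_j Pr (B j).
Proof.
rewrite /Pr (exchange_big_dep xpredT) //= [X in _ <= X](bigID (fun D => [exists j, B j D])) /=.
rewrite -[X in X <= _]addr0; apply: lerD.
  apply: ler_sum => D /existsP[j hj].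
  by rewrite (bigD1 j) //= lerDl; apply: sumr_ge0 => ? _; exact: W_ge0.
by apply: sumr_ge0 => D _; apply: sumr_ge0 => ? _; exact: W_ge0.
Qed.

Lemma Pr_or (E F : pred {ffun 'I_n -> X}) : Pr (fun D => E D || F D) <= Pr E + Pr F.
Proof.
have := @Pr_exists bool (fun b => if b then E else F); rewrite big_bool /=.
apply: le_trans; apply: Pr_mono => D /orP[hD|hD]; apply/existsP.
- by exists true.
- by exists false.
Qed.

End ProductMeasure.

Section SeqExtrema.
Variable R : realType.

Lemma seqmax0_ge0 (T : eqType) (F : T -> R) s : 0 <= seqmax0 F s.
Proof.
rewrite /seqmax0; elim: s => [|a s IH]; first by rewrite big_nil.
by rewrite big_cons le_max IH orbT.
Qed.

Lemma seqmax0_ge (T : eqType) (F : T -> R) s x : x \in s -> F x <= seqmax0 F s.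
Proof.
rewrite /seqmax0; elim: s => [|a s IH] //; rewrite in_cons big_cons le_max.
by case/orP => [/eqP -> | /IH ->]; rewrite ?lexx ?orbT.
Qed.

Lemma bigmin_attained (T : eqType) (F : T -> R) (idx : R) s :
  \big[Num.min/idx]_(x <- s) F x = idx \/
  exists2 x, x \in s & \big[Num.min/idx]_(x <- s) F x = F x.
Proof.
elim: s => [|a s IH]; first by left; rewrite big_nil.
rewrite big_cons; set m := \big[Num.min/idx]_(x <- s) F x in IH *.
have [h|h] := leP (F a) m; first by right; exists a; rewrite ?mem_head // (min_idPl h).
case: IH => [->|[x hx ->]]; first by left.
by right; exists x; rewrite // in_cons hx orbT.
Qed.

Lemma seqmin_attained (T : eqType) (x0 : T) (F : T -> R) s :
  s != [::] -> exists2 x, x \in s & seqmin x0 F s = F x.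
Proof.
case: s => [//|a s] _; rewrite /seqmin /=.
case: (bigmin_attained F (F a) (a :: s)) => [->|[x hx ->]]; last by exists x.
by exists a; rewrite ?mem_head.
Qed.

End SeqExtrema.

Section ExcessLoss.
Variables (R : realType) (S A : finType) (gamma lam : R)
  (P : S -> A -> {ffun S -> R}) (Rw : S -> A -> R).

Definition trans_weight (mu : {ffun S * A -> R}) (x : (S * A) * S) : R :=
  mu x.1 * P x.1.1 x.1.2 x.2.

Lemma sum_transitions (F : (S * A) * S -> R) :
  \sum_x F x = \sum_(sa : S * A) \sum_(s' : S) F (sa, s').
Proof. by rewrite pair_bigA; apply: eq_bigr => -[]. Qed.

Variables (V : {ffun S -> R}) (pi : {ffun S * A -> R}).
Local Notation CV := (bellC P Rw gamma lam pi V).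

Definition target (x : (S * A) * S) : R :=
  Rw x.1.1 x.1.2 + gamma * V x.2 - lam * ln (pi x.1).

Definition excess_loss (g : {ffun S * A -> R}) (x : (S * A) * S) : R :=
  (g x.1 - target x) ^+ 2 - (CV x.1 - target x) ^+ 2.

Lemma emp_risk_gap n (D : {ffun 'I_n -> (S * A) * S}) (g : {ffun S * A -> R}) :
  emp_risk Rw gamma lam D g V pi - emp_risk Rw gamma lam D CV V pi =
  n%:R^-1 * \sum_(i < n) excess_loss g (D i).
Proof.
rewrite /emp_risk -mulrBr -sumrB; congr (_ * _); apply: eq_bigr => i _.
by rewrite /excess_loss /target; ring.
Qed.

Lemma excess_loss_split (g : {ffun S * A -> R}) sa s' :
  excess_loss g (sa, s') =
  (g sa - CV sa) ^+ 2 + 2 * (g sa - CV sa) * (CV sa - target (sa, s')).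
Proof. by rewrite /excess_loss; set y := target _; rewrite /=; ring. Qed.

Hypothesis hP1 : forall s a, \sum_(s' : S) P s a s' = 1.

Lemma target_centred (sa : S * A) :
  \sum_(s' : S) P sa.1 sa.2 s' * (CV sa - target (sa, s')) = 0.
Proof.
have e s' : P sa.1 sa.2 s' * (CV sa - target (sa, s')) =
    P sa.1 sa.2 s' * (gamma * \sum_(s'' : S) P sa.1 sa.2 s'' * V s'')
    - gamma * (P sa.1 sa.2 s' * V s').
  by rewrite /bellC ffunE /target /=; ring.
under eq_bigr do rewrite e.
by rewrite sumrB -mulr_suml hP1 mul1r -mulr_sumr subrr.
Qed.

Variables (mu : {ffun S * A -> R}) (K t : R).
Hypotheses (hP0 : forall s a s', 0 <= P s a s') (hmu0 : forall sa, 0 <= mu sa)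
  (hmu1 : \sum_sa mu sa = 1) (t0 : 0 < t) (htK : 64 * t * K ^+ 2 <= 1)
  (htarget : forall sa s', (CV sa - target (sa, s')) ^+ 2 <= 4 * K ^+ 2).
Variable g : {ffun S * A -> R}.
Hypothesis hg : forall sa, (g sa - CV sa) ^+ 2 <= 4 * K ^+ 2.

(* Conditioning on (s,a) reduces the exponential moment of +-Z_g to centred_mgf. *)
Lemma mgf_excess_loss (sg : R) : sg ^+ 2 = 1 ->
  \sum_x trans_weight mu x * expR (t * (sg * excess_loss g x)) <=
  \sum_sa mu sa * (expR (t * (sg * (g sa - CV sa) ^+ 2)) * (1 + t * (g sa - CV sa) ^+ 2)).
Proof.
move=> hsg; rewrite sum_transitions; apply: ler_sum => sa _.
have -> : \sum_(s' : S) trans_weight mu (sa, s') * expR (t * (sg * excess_loss g (sa, s'))) =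
    mu sa * \sum_(s' : S) P sa.1 sa.2 s' * expR (t * (sg * ((g sa - CV sa) ^+ 2
      + 2 * (g sa - CV sa) * (CV sa - target (sa, s'))))).
  by rewrite mulr_sumr; apply: eq_bigr => s' _; rewrite excess_loss_split /trans_weight -mulrA.
apply: ler_wpM2l => //; apply: centred_mgf => //; exact: target_centred.
Qed.

Lemma mgf_excess_loss_neg :
  \sum_x trans_weight mu x * expR (t * - excess_loss g x) <= 1.
Proof.
have := @mgf_excess_loss (-1); rewrite sqrrN expr1n => /(_ erefl).
under eq_bigr do rewrite mulN1r.
move/le_trans; apply; rewrite -[leRHS]hmu1; apply: ler_sum => sa _.
rewrite -[leRHS]mulr1; apply: ler_wpM2l => //.
set v := t * (g sa - CV sa) ^+ 2.
rewrite mulN1r mulrN -/v expRN mulrC ler_pdivrMr ?expR_gt0 // mul1r; exact: expR_ge1Dx.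
Qed.

Lemma mgf_excess_loss_pos :
  \sum_x trans_weight mu x * expR (t * excess_loss g x) <=
  expR (4 * t * sqnorm_mu mu (fun sa => g sa - CV sa)).
Proof.
have := @mgf_excess_loss 1; rewrite expr1n => /(_ erefl).
under eq_bigr do rewrite mul1r.
move/le_trans; apply.
apply: (le_trans (y := \sum_sa mu sa * (1 + 4 * t * (g sa - CV sa) ^+ 2))).
  apply: ler_sum => sa _; apply: ler_wpM2l => //; rewrite mul1r.
  set v := t * (g sa - CV sa) ^+ 2.
  have hv0 : 0 <= v by apply: mulr_ge0; [exact: ltW | exact: sqr_ge0].
  have hv1 : v <= 1/16.
    apply: (le_trans (ler_wpM2l (ltW t0) (hg sa))).
    have -> : t * (4 * K ^+ 2) = (64 * t * K ^+ 2) / 16 by field.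
    by rewrite ler_pM2r ?invr_gt0.
  apply: (le_trans (y := expR v * expR v)); first by rewrite ler_pM2l ?expR_gt0 // expR_ge1Dx.
  rewrite -expRD (_ : 1 + 4 * t * _ = 1 + 2 * (v + v)); last by rewrite /v; ring.
  apply: expR_le_lin; lra.
rewrite /sqnorm_mu (_ : \sum_sa _ = 1 + 4 * t * \sum_sa mu sa * (g sa - CV sa) ^+ 2).
  exact: expR_ge1Dx.
under eq_bigr do rewrite mulrDr mulr1.
rewrite big_split /= hmu1 mulr_sumr; congr (1 + _); apply: eq_bigr => sa _; ring.
Qed.

End ExcessLoss.

Section Ranges.
Variables (R : realType) (S A : finType) (gamma Rmax lam : R)
  (P : S -> A -> {ffun S -> R}) (Rw : S -> A -> R)
  (V : {ffun S -> R}) (pi : {ffun S * A -> R}).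
Local Notation K := (Vlmax A gamma Rmax lam).
Hypotheses (hgamma0 : 0 <= gamma) (hgamma1 : gamma < 1) (hlam : 0 < lam)
  (hA : (0 < #|A|)%N) (hRw : forall s a, 0 <= Rw s a <= Rmax)
  (hP0 : forall s a s', 0 <= P s a s') (hP1 : forall s a, \sum_(s' : S) P s a s' = 1)
  (hV : forall s, 0 <= V s <= K)
  (hpi0 : forall s a, 0 < pi (s, a)) (hpi1 : forall s, \sum_(a : A) pi (s, a) = 1)
  (hpil : forall s a, `|ln (pi (s, a))| <= K / lam).

(* Rmax <= (1 - gamma) K, since lambda ln |A| >= 0. *)
Lemma Rmax_le : Rmax <= (1 - gamma) * K.
Proof.
have hg : 1 - gamma != 0 by rewrite subr_eq0 eq_sym lt_eqF.
rewrite /Vlmax mulrC divfK //.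
have : 0 <= ln (#|A|%:R : R) by apply: ln_ge0; rewrite ler1n.
by move/(mulr_ge0 (ltW hlam)); lra.
Qed.

Lemma entropy_range s a : - K <= lam * ln (pi (s, a)) <= 0.
Proof.
have hle1 : pi (s, a) <= 1.
  by rewrite -(hpi1 s) (bigD1 a) //= lerDl; apply: sumr_ge0 => b _; exact: ltW.
have := hpil s a; rewrite ler_norml => /andP[h1 _].
have := ler_wpM2l (ltW hlam) h1.
rewrite mulrN mulrCA divff ?mulr1 ?lt0r_neq0 // => ->.
by rewrite pmulr_rle0 // ln_le0.
Qed.

Lemma PV_range s a : 0 <= \sum_(s' : S) P s a s' * V s' <= K.
Proof.
apply/andP; split.
  by apply: sumr_ge0 => s' _; apply: mulr_ge0 => //; case/andP: (hV s').
rewrite -[X in _ <= X]mul1r -(hP1 s a) mulr_suml; apply: ler_sum => s' _.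
by apply: ler_wpM2l => //; case/andP: (hV s').
Qed.

Lemma bellC_range sa : 0 <= bellC P Rw gamma lam pi V sa <= 2 * K.
Proof.
case: sa => s a; rewrite /bellC ffunE /=.
have := Rmax_le; have := entropy_range s a; have := PV_range s a; have := hRw s a.
move=> /andP[r0 r1] /andP[p0 p1] /andP[q0 q1] hm.
have := mulr_ge0 hgamma0 p0; have := ler_wpM2l hgamma0 p1.
have : 0 <= gamma * K by apply: mulr_ge0 => //; lra.
by move=> *; apply/andP; split; nra.
Qed.

Lemma target_range sa s' : 0 <= target gamma lam Rw V pi (sa, s') <= 2 * K.
Proof.
case: sa => s a; rewrite /target /=.
have := Rmax_le; have := entropy_range s a; have := hV s'; have := hRw s a.
move=> /andP[r0 r1] /andP[p0 p1] /andP[q0 q1] hm.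
have := mulr_ge0 hgamma0 p0; have := ler_wpM2l hgamma0 p1.
by move=> *; apply/andP; split; nra.
Qed.

End Ranges.

Lemma sqr_dist_le (R : realType) (K a b : R) :
  0 <= a <= 2 * K -> 0 <= b <= 2 * K -> (a - b) ^+ 2 <= 4 * K ^+ 2.
Proof. by move=> /andP[? ?] /andP[? ?]; nra. Qed.

(* Deterministic core: a minimiser whose empirical excess is bounded below,
   compared with a competitor whose empirical excess is bounded above. *)
Lemma gap_from_sums (R : realType) (m a b f X Y e io : R) :
  0 < m -> 0 <= e -> 0 <= io ->
  a - f = m^-1 * X -> b - f = m^-1 * Y -> a <= b ->
  - io < X -> Y < m * e + io -> `|a - f| <= e + io / m.
Proof.
move=> m0 e0 io0 ha hb hab hX hY.
have hm : m^-1 * m = 1 by rewrite mulVf ?lt0r_neq0.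
have mi0 : 0 <= m^-1 by rewrite invr_ge0 ltW.
have h1 := ler_wpM2l mi0 (ltW hX).
have h2 := ler_wpM2l mi0 (ltW hY).
rewrite mulrN in h1; rewrite mulrDr mulrA hm mul1r in h2.
have : 0 <= io / m by apply: divr_ge0 => //; exact: ltW.
rewrite ler_norml /= mulrC; move=> h3; apply/andP; split; lra.
Qed.

Section Concentration.
Variables (R : realType) (S A : finType) (gamma Rmax lam : R)
  (P : S -> A -> {ffun S -> R}) (Rw : S -> A -> R) (mu : {ffun S * A -> R})
  (Vs : seq {ffun S -> R}) (Ps : seq {ffun S * A -> R}) (Gs : seq {ffun S * A -> R})
  (n : nat) (delta : R)
  (ghat : {ffun 'I_n -> (S * A) * S} -> {ffun S -> R} -> {ffun S * A -> R} ->
          {ffun S * A -> R}).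
Local Notation K := (Vlmax A gamma Rmax lam).
Local Notation eps := (eps_approx P Rw gamma lam mu Vs Ps Gs).
Local Notation N := ((size Vs)%:R * (size Ps)%:R * (size Gs)%:R : R).
Local Notation iota := (K ^+ 2 * ln (N / delta)).
Local Notation CV V pi := (bellC P Rw gamma lam pi V).
Local Notation Z V pi := (excess_loss gamma lam P Rw V pi).
Local Notation PrD := (Pr (trans_weight P mu)).
Local Notation Data := {ffun 'I_n -> (S * A) * S}.

Hypotheses (hgamma0 : 0 <= gamma) (hgamma1 : gamma < 1) (hlam : 0 < lam)
  (hA : (0 < #|A|)%N) (hRw : forall s a, 0 <= Rw s a <= Rmax)
  (hP0 : forall s a s', 0 <= P s a s') (hP1 : forall s a, \sum_(s' : S) P s a s' = 1)
  (hmu0 : forall sa, 0 <= mu sa) (hmu1 : \sum_(sa : S * A) mu sa = 1)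
  (uniqV : uniq Vs) (uniqP : uniq Ps) (uniqG : uniq Gs)
  (nV : Vs != [::]) (nP : Ps != [::]) (nG : Gs != [::])
  (hVs : forall V, V \in Vs -> forall s, 0 <= V s <= K)
  (hPs : forall pi, pi \in Ps ->
     (forall s a, 0 < pi (s, a)) /\ (forall s, \sum_(a : A) pi (s, a) = 1) /\
     (forall s a, `|ln (pi (s, a))| <= K / lam))
  (hGs : forall g, g \in Gs -> forall sa, 0 <= g sa <= 2 * K)
  (hn : (0 < n)%N)
  (hghat : forall D V pi, V \in Vs -> pi \in Ps ->
     ghat D V pi \in Gs /\
     (forall g, g \in Gs -> emp_risk Rw gamma lam D (ghat D V pi) V pi
                           <= emp_risk Rw gamma lam D g V pi))
  (hdelta0 : 0 < delta) (hdelta1 : delta < 1).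

Lemma trans_weight_ge0 x : 0 <= trans_weight P mu x.
Proof. exact: mulr_ge0. Qed.

Lemma trans_weight_sum : \sum_x trans_weight P mu x = 1.
Proof.
rewrite sum_transitions -hmu1; apply: eq_bigr => sa _.
by rewrite /trans_weight /= -mulr_sumr hP1 mulr1.
Qed.

Lemma bellC_range_in V pi sa : V \in Vs -> pi \in Ps -> 0 <= CV V pi sa <= 2 * K.
Proof. by move=> hV /hPs[? [? ?]]; apply: bellC_range => //; exact: hVs. Qed.

Lemma target_dev_le V pi sa s' : V \in Vs -> pi \in Ps ->
  (CV V pi sa - target gamma lam Rw V pi (sa, s')) ^+ 2 <= 4 * K ^+ 2.
Proof.
move=> hV hpi; apply: sqr_dist_le; first exact: bellC_range_in.
by have [? [? ?]] := hPs hpi; apply: target_range => //; exact: hVs.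
Qed.

Lemma fit_dev_le V pi g sa : V \in Vs -> pi \in Ps -> g \in Gs ->
  (g sa - CV V pi sa) ^+ 2 <= 4 * K ^+ 2.
Proof. by move=> hV hpi hg; apply: sqr_dist_le; [exact: hGs | exact: bellC_range_in]. Qed.

Lemma approx_witness V pi : V \in Vs -> pi \in Ps ->
  exists2 g, g \in Gs & sqnorm_mu mu (fun sa => g sa - CV V pi sa) <= eps.
Proof.
move=> hV hpi.
have [g hg hmin] := seqmin_attained [ffun=> 0]
  (fun g : {ffun S * A -> R} => sqnorm_mu mu (fun sa => g sa - CV V pi sa)) nG.
exists g => //; rewrite -hmin.
apply: (le_trans _ (seqmax0_ge _ hV)) => /=.
exact: (le_trans _ (seqmax0_ge _ hpi)).
Qed.

Lemma N_ge1 : 1 <= N.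
Proof. by rewrite -!natrM ler1n !muln_gt0 !lt0n !size_eq0 nV nP nG. Qed.

Local Notation t := ((64 * K ^+ 2)^-1).

Lemma t_gt0 : 0 < K -> 0 < t.
Proof. by move=> K0; rewrite invr_gt0 mulr_gt0 ?exprn_gt0. Qed.

Lemma t_scale : 0 < K -> 64 * t * K ^+ 2 <= 1.
Proof. by move=> K0; rewrite mulrAC mulfV // lt0r_neq0 // mulr_gt0 ?exprn_gt0. Qed.

Lemma deviation_cost : 0 < K -> expR (- (t * (64 * iota))) = delta / N.
Proof.
move=> K0; have N1 := N_ge1.
have hK : 64 * K ^+ 2 != 0 by apply: lt0r_neq0; apply: mulr_gt0; [lra | exact: exprn_gt0].
have hNd : 0 < N / delta by rewrite divr_gt0 //; lra.
rewrite (_ : 64 * iota = 64 * K ^+ 2 * ln (N / delta)); last by ring.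
by rewrite mulrA mulVf // mul1r expRN lnK ?posrE // invf_div.
Qed.

Definition lower_dev (j : seq_sub Vs * seq_sub Ps * seq_sub Gs) (D : Data) : bool :=
  64 * iota <= \sum_(i < n) - Z (val j.1.1) (val j.1.2) (val j.2) (D i).

Definition upper_dev (gstar : seq_sub Vs * seq_sub Ps -> {ffun S * A -> R})
  (j : seq_sub Vs * seq_sub Ps) (D : Data) : bool :=
  n%:R * (4 * eps) + 64 * iota <= \sum_(i < n) Z (val j.1) (val j.2) (gstar j) (D i).

Definition approx_competitor (gstar : seq_sub Vs * seq_sub Ps -> {ffun S * A -> R}) : Prop :=
  forall j, gstar j \in Gs /\
    sqnorm_mu mu (fun sa => gstar j sa - CV (val j.1) (val j.2) sa) <= eps.

Definition some_deviation (gstar : seq_sub Vs * seq_sub Ps -> {ffun S * A -> R})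
  (D : Data) : bool :=
  [exists j, lower_dev j D] || [exists j, upper_dev gstar j D].

Lemma lower_dev_prob j : 0 < K -> PrD (lower_dev j) <= delta / N.
Proof.
move=> K0; rewrite -deviation_cost //.
have := @Pr_chernoff _ _ n _ trans_weight_ge0
  (fun x => - Z (val j.1.1) (val j.1.2) (val j.2) x) t (64 * iota) 0 (t_gt0 K0).
rewrite mulr0 sub0r; apply; rewrite expR0.
apply: (mgf_excess_loss_neg hP1 hP0 hmu0 hmu1 (t_gt0 K0) (t_scale K0)).
- by move=> sa s'; apply: target_dev_le; exact: valP.
- by move=> sa; apply: fit_dev_le; exact: valP.
Qed.

Lemma upper_dev_prob gstar j : 0 < K ->
  gstar j \in Gs -> sqnorm_mu mu (fun sa => gstar j sa - CV (val j.1) (val j.2) sa) <= eps ->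
  PrD (upper_dev gstar j) <= delta / N.
Proof.
move=> K0 hg heps; rewrite -deviation_cost //.
have := @Pr_chernoff _ _ n _ trans_weight_ge0
  (Z (val j.1) (val j.2) (gstar j)) t (n%:R * (4 * eps) + 64 * iota) (4 * t * eps) (t_gt0 K0).
rewrite (_ : _ - _ = - (t * (64 * iota))); last by ring.
apply; apply: le_trans.
  apply: (mgf_excess_loss_pos hP1 hP0 hmu0 hmu1 (t_gt0 K0) (t_scale K0)).
  - by move=> sa s'; apply: target_dev_le; exact: valP.
  - by move=> sa; apply: fit_dev_le => //; exact: valP.
by rewrite ler_expR ler_wpM2l // mulr_ge0 // ltW // t_gt0.
Qed.

Lemma deviation_prob gstar : 0 < K ->
  approx_competitor gstar ->
  PrD (some_deviation gstar) <= 2 * delta.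
Proof.
move=> K0 hgstar; have N1 := N_ge1; have hdN : 0 <= delta / N by rewrite divr_ge0 // ltW.
apply: (le_trans (Pr_or trans_weight_ge0 _ _)).
rewrite (_ : 2 * delta = delta + delta); last by ring.
apply: lerD.
  apply: (le_trans (Pr_exists trans_weight_ge0 _)).
  apply: (le_trans (ler_sum _ (fun j _ => lower_dev_prob j K0))).
  rewrite sumr_const !card_prod !card_seq_sub // -[X in X <= _]mulr_natr !natrM.
  by rewrite divfK ?lt0r_neq0 //; lra.
apply: (le_trans (Pr_exists trans_weight_ge0 _)).
apply: (le_trans (y := \sum_j delta / N)).
  by apply: ler_sum => j _; have [] := hgstar j; exact: upper_dev_prob.
rewrite sumr_const card_prod !card_seq_sub // -[X in X <= _]mulr_natr natrM.
have hVP : (size Vs)%:R * (size Ps)%:R <= N.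
  by rewrite -[X in X <= _]mulr1 ler_wpM2l ?ler1n ?lt0n ?size_eq0.
by apply: (le_trans (ler_wpM2l hdN hVP)); rewrite divfK ?lt0r_neq0 //; lra.
Qed.

(* iota >= 0 since N / delta >= 1. *)
Lemma iota_ge0 : 0 <= iota.
Proof.
apply: mulr_ge0; first exact: sqr_ge0.
by apply: ln_ge0; rewrite ler_pdivlMr // mul1r; have := N_ge1; have := hdelta1; lra.
Qed.

Definition risk_bound_holds (D : Data) (v : seq_sub Vs) (p : seq_sub Ps) : bool :=
  `| emp_risk Rw gamma lam D (ghat D (val v) (val p)) (val v) (val p)
     - emp_risk Rw gamma lam D (CV (val v) (val p)) (val v) (val p) |
  <= 64 * (eps + Num.sqrt (iota / n%:R * eps) + iota / n%:R).

(* If no tail deviation occurs, the empirical minimality of g_hat against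
   the competitor gstar confines its excess risk to [-64 iota/n, 4 eps + 64 iota/n]. *)
Lemma bound_without_deviation gstar D :
  approx_competitor gstar ->
  ~~ some_deviation gstar D ->
  [forall v, forall p, risk_bound_holds D v p].
Proof.
move=> hgstar; rewrite /some_deviation negb_or => /andP[/existsPn hlow /existsPn hup].
apply/forallP => v; apply/forallP => p.
have [hg hmin] := hghat D (valP v) (valP p).
have [hgs _] := hgstar (v, p).
have hX : - (64 * iota) < \sum_(i < n) Z (val v) (val p) (ghat D (val v) (val p)) (D i).
  by move: (hlow (v, p, SeqSub hg)); rewrite /lower_dev /= -ltNge sumrN ltrNl.
have hY := hup (v, p); rewrite /upper_dev -ltNge in hY.
have n0 : 0 < n%:R :> R by rewrite ltr0n.
have eps0 : 0 <= eps by exact: seqmax0_ge0.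
have hgap := gap_from_sums n0 (mulr_ge0 (ler0n _ 4) eps0) (mulr_ge0 (ler0n _ 64) iota_ge0)
  (emp_risk_gap _ _ _ _ _ _ D _) (emp_risk_gap _ _ _ _ _ _ D _) (hmin _ hgs) hX hY.
rewrite -[64 * iota / _]mulrA in hgap.
have := sqrtr_ge0 (iota / n%:R * eps); have := divr_ge0 iota_ge0 (ltW n0).
by rewrite /risk_bound_holds; lra.
Qed.

Lemma degenerate_fit V pi g : K <= 0 -> V \in Vs -> pi \in Ps -> g \in Gs -> g = CV V pi.
Proof.
move=> K0 hV hpi hg; apply/ffunP => sa.
have /andP[g0 g1] := hGs hg sa; have /andP[c0 c1] := bellC_range_in sa hV hpi.
by apply/eqP; rewrite eq_le; apply/andP; split; lra.
Qed.

Lemma excess_risk_concentration :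
  1 - 2 * delta <= PrD (fun D => [forall v, forall p, risk_bound_holds D v p]).
Proof.
have [K0|K0] := ltP 0 K; last first.
  apply: (le_trans _ (Pr_mono trans_weight_ge0 (E := xpredT) _)).
    by rewrite (Pr_total n trans_weight_sum); have := hdelta0; lra.
  move=> D _; apply/forallP => v; apply/forallP => p.
  have [hg _] := hghat D (valP v) (valP p).
  rewrite /risk_bound_holds (degenerate_fit K0 (valP v) (valP p) hg) subrr normr0.
  by rewrite mulr_ge0 // !addr_ge0 ?divr_ge0 ?sqrtr_ge0 ?iota_ge0 ?seqmax0_ge0.
have hwit (j : seq_sub Vs * seq_sub Ps) : exists g, g \in Gs /\
    sqnorm_mu mu (fun sa => g sa - CV (val j.1) (val j.2) sa) <= eps.
  by have [g hg hle] := approx_witness (valP j.1) (valP j.2); exists g.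
have [gstar hgstar] := choice hwit.
apply: le_trans (Pr_mono trans_weight_ge0 (fun D => @bound_without_deviation gstar D hgstar)).
rewrite (Pr_compl _ trans_weight_sum) lerD2l lerN2.
apply: le_trans (deviation_prob K0 hgstar).
by apply: (Pr_mono trans_weight_ge0) => D; rewrite /= negbK.
Qed.

End Concentration.

Theorem mainTheorem8 (R : realType) :
  exists c : R, 0 < c /\
  forall (S A : finType) (gamma Rmax lam : R)
    (P : S -> A -> {ffun S -> R}) (Rw : S -> A -> R) (mu : {ffun S * A -> R})
    (Vs : seq {ffun S -> R}) (Ps : seq {ffun S * A -> R}) (Gs : seq {ffun S * A -> R})
    (n : nat) (delta : R)
    (ghat : {ffun 'I_n -> (S * A) * S} -> {ffun S -> R} -> {ffun S * A -> R} ->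
            {ffun S * A -> R}),
  0 <= gamma -> gamma < 1 -> 0 < lam -> (0 < #|A|)%N ->
  (forall s a, 0 <= Rw s a <= Rmax) ->
  (forall s a s', 0 <= P s a s') -> (forall s a, \sum_(s' : S) P s a s' = 1) ->
  (forall sa, 0 <= mu sa) -> \sum_(sa : S * A) mu sa = 1 ->
  uniq Vs -> uniq Ps -> uniq Gs ->
  Vs != [::] -> Ps != [::] -> Gs != [::] ->
  (forall V, V \in Vs -> forall s, 0 <= V s <= Vlmax A gamma Rmax lam) ->
  (forall pi, pi \in Ps ->
     (forall s a, 0 < pi (s, a)) /\ (forall s, \sum_(a : A) pi (s, a) = 1) /\
     (forall s a, `|ln (pi (s, a))| <= Vlmax A gamma Rmax lam / lam)) ->
  (forall g, g \in Gs -> forall sa, 0 <= g sa <= 2 * Vlmax A gamma Rmax lam) ->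
  (0 < n)%N ->
  (forall D V pi, V \in Vs -> pi \in Ps ->
     ghat D V pi \in Gs /\
     (forall g, g \in Gs -> emp_risk Rw gamma lam D (ghat D V pi) V pi
                           <= emp_risk Rw gamma lam D g V pi)) ->
  0 < delta -> delta < 1 ->
  let eps := eps_approx P Rw gamma lam mu Vs Ps Gs in
  let iota := Vlmax A gamma Rmax lam ^+ 2 *
              ln ((size Vs)%:R * (size Ps)%:R * (size Gs)%:R / delta) in
  1 - 2 * delta <=
  data_prob mu P (fun D =>
    [forall V : seq_sub Vs, forall pi : seq_sub Ps,
      `| emp_risk Rw gamma lam D (ghat D (val V) (val pi)) (val V) (val pi)
         - emp_risk Rw gamma lam D (bellC P Rw gamma lam (val pi) (val V)) (val V) (val pi) |
      <= c * (eps + Num.sqrt (iota / n%:R * eps) + iota / n%:R)]).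
Proof.
exists 64; split; first lra.
move=> S A gamma Rmax lam P Rw mu Vs Ps Gs n delta ghat *.
exact: excess_risk_concentration.
Qed.
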